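(* Let $G=(V,E)$ be a simple connected graph with $n=|V|$ vertices and diameter $d=\mathrm{diam}(G)$. Suppose $G$ has a dominating set of size $\gamma$. Then the pebbling number of $G$ satisfies $$f(G) \leq 2^{d+1}\gamma + n - 3\gamma + 1.$$
   Context: A dominating set of $G$ is a set $S\subseteq V$ such that every vertex not in $S$ is adjacent to at least one vertex of $S$. A distribution of pebbles on $G$ is a function $D: V \to \mathbb{N}=\{0,1,2,\dots\}$; its size is $|D|=\sum_{v\in V} D(v)$. A pebbling step removes two pebbles from some vertex and places one pebble on an adjacent vertex. For a root vertex $v$, $D$ is $v$-solvable if, after some finite sequence of pebbling steps starting from $D$, at least one pebble is on $v$; $D$ is solvable if it is $v$-solvable for every $v\in V$. The pebbling number $f(G)$ is the smallest integer $N$ such that every distribution of size $N$ on $G$ is solvable. *)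

From Stdlib Require Import ClassicalEpsilon Relation_Operators.
From mathcomp Require Import all_boot.
Set Implicit Arguments. Unset Strict Implicit. Unset Printing Implicit Defensive.

Section Graphs.
Variable T : finType.
Implicit Types (e : rel T) (D : {ffun T -> nat}).

Definition decP (P : Prop) : bool :=
  if excluded_middle_informative P then true else false.

(* least natural number satisfying P, or 0 if none exists *)
Definition least (P : nat -> Prop) : nat :=
  match excluded_middle_informative (exists n, decP (P n)) with
  | left H => ex_minn H
  | right _ => 0
  end.

Definition simple_graph e := symmetric e /\ irreflexive e.

Definition connected_graph e := forall x y : T, connect e x y.

Definition gdist e (x y : T) : nat :=
  least (fun k => exists p : seq T, [/\ size p = k, path e x p & last x p = y]).

Definition diam e : nat := \max_(x : T) \max_(y : T) gdist e x y.

Definition dominating e (S : {set T}) :=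
  forall v, v \notin S -> exists2 u, u \in S & e v u.

Definition dsize D : nat := \sum_(v : T) D v.

Definition pebbling_step e D D' :=
  exists u w, [/\ e u w, 2 <= D u &
    D' = [ffun x => (if x == u then D x - 2 else D x) + (if x == w then 1 else 0)]].

Definition reachable e := clos_refl_trans _ (pebbling_step e).

Definition root_solvable e D (v : T) := exists D', reachable e D D' /\ 0 < D' v.

Definition solvable e D := forall v, root_solvable e D v.

Definition pebbling_number e : nat :=
  least (fun N => forall D, dsize D = N -> solvable e D).

End Graphs.

From Pilot Require Import Defs.
From mathcomp Require Import all_boot zify.
From Stdlib Require Import ClassicalEpsilon Relation_Operators.
Set Implicit Arguments. Unset Strict Implicit. Unset Printing Implicit Defensive.

(* Map every vertex to a vertex of S dominating it; this splits V into |S|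
   stars, each made of some s in S and the vertices C(s) it dominates. If for
   some star D(s) + sum_{v in C(s)} floor(D(v)/2) >= 2^d, moving pebbles from
   the leaves to s gathers 2^d pebbles on s, enough to push one along a
   shortest path (of length <= d) to any root. Otherwise, as
   D(v) <= 2 floor(D(v)/2) + 1, each star carries at most 2^(d+1) + |C(s)| - 2
   pebbles, and summing over the stars gives |D| <= 2^(d+1)|S| + n - 3|S|. *)

Lemma decP_true (P : Prop) : Defs.decP P = true <-> P.
Proof. by rewrite /Defs.decP; case: excluded_middle_informative. Qed.

Lemma least_spec (P : nat -> Prop) n : P n -> P (least P) /\ least P <= n.
Proof.
move=> Pn; rewrite /least; case: excluded_middle_informative => [ex|nex]; last first.
  by case: nex; exists n; apply/decP_true.
case: ex_minnP => m /decP_true Pm m_min; split=> //; exact/m_min/decP_true.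
Qed.

Lemma pebbling_number_le (T : finType) (e : rel T) N :
  (forall D : {ffun T -> nat}, dsize D = N -> solvable e D) -> pebbling_number e <= N.
Proof. by move=> HN; case: (least_spec (P := fun N => forall D, dsize D = N -> solvable e D) HN). Qed.

Lemma gdist_path (T : finType) (e : rel T) x y : connect e x y ->
  exists p, [/\ path e x p, last x p = y & size p = gdist e x y].
Proof.
case/connectP=> p p_path p_last.
have [[q [q_size q_path q_last]] _] := least_spec (P := fun k =>
  exists q, [/\ size q = k, path e x q & last x q = y]) (ex_intro _ p (And3 erefl p_path (esym p_last))).
by exists q.
Qed.

Lemma gdist_le_diam (T : finType) (e : rel T) x y : gdist e x y <= diam e.
Proof.
apply: leq_trans (leq_bigmax (F := fun x => \max_(y : T) gdist e x y) x).
exact: (leq_bigmax (F := gdist e x)).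
Qed.

Lemma sum_le_double_halves (T : finType) (A : {set T}) (F : T -> nat) :
  \sum_(v in A) F v <= (\sum_(v in A) (F v)./2).*2 + #|A|.
Proof.
rewrite -mul2n big_distrr -sum1_card -big_split; apply: leq_sum => v _ /=; lia.
Qed.

Section Pebbling.
Variables (T : finType) (e : rel T).
Hypothesis e_irr : irreflexive e.
Implicit Types (D : {ffun T -> nat}) (u w s : T).

Definition move_pebbles D u w k : {ffun T -> nat} :=
  [ffun x => (if x == u then D x - k.*2 else D x) + (if x == w then k else 0)].

Lemma reachable_move_pebbles D u w k :
  e u w -> k.*2 <= D u -> reachable e D (move_pebbles D u w k).
Proof.
move=> euw; have /negbTE uw : u != w by apply: contraTneq euw => ->; rewrite e_irr.
elim: k => [|k IHk] Dk.
  suff -> : move_pebbles D u w 0 = D by apply: rt_refl.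
  by apply/ffunP => x; rewrite !ffunE; case: eqP; case: eqP; lia.
apply: rt_trans (IHk _) _; first lia.
apply: rt_step; exists u, w; split=> //; first by rewrite ffunE eqxx uw; lia.
apply/ffunP => x; rewrite !ffunE.
by case: (x =P u) => [->|_]; [rewrite uw | case: (x =P w)]; lia.
Qed.

Lemma root_solvable_path D s p :
  path e s p -> 2 ^ size p <= D s -> root_solvable e D (last s p).
Proof.
elim: p s D => [|x p IHp] s D /=.
  by move=> _; rewrite expn0 => Ds; exists D; split; first exact: rt_refl.
case/andP=> esx p_path; rewrite expnS mul2n => Ds.
have /negbTE xs : x != s by apply: contraTneq esx => ->; rewrite e_irr.
have [|D' [reach_D' D'_last]] := IHp x (move_pebbles D s x (2 ^ size p)) p_path.
  by rewrite ffunE xs eqxx leq_addl.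
by exists D'; split=> //; apply: rt_trans (reachable_move_pebbles esx Ds) reach_D'.
Qed.

Lemma reachable_gather D s (vs : seq T) : uniq vs -> s \notin vs ->
  (forall v, v \in vs -> e v s) ->
  exists D', [/\ reachable e D D', D s + \sum_(v <- vs) (D v)./2 <= D' s
    & forall x, x \notin vs -> x != s -> D' x = D x].
Proof.
elim: vs D => [|v vs IHvs] D.
  by move=> _ _ _; exists D; split; [exact: rt_refl | rewrite big_nil addn0 |].
case/andP=> v_vs vs_uniq; rewrite inE negb_or => /andP[/negbTE sv s_vs] vs_adj.
have [|D1 [reach_D1 D1s D1_frame]] := IHvs D vs_uniq s_vs.
  by move=> x x_vs; apply: vs_adj; rewrite inE x_vs orbT.
have evs : e v s by apply: vs_adj; rewrite inE eqxx.
have D1v : D1 v = D v by apply: D1_frame; rewrite // eq_sym sv.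
have half_v : ((D1 v)./2).*2 <= D1 v by lia.
exists (move_pebbles D1 v s (D1 v)./2); split.
- exact: rt_trans reach_D1 (reachable_move_pebbles evs half_v).
- by rewrite big_cons ffunE eqxx sv D1v; lia.
- move=> x; rewrite inE negb_or => /andP[/negbTE xv x_vs] /negbTE xs.
  by rewrite ffunE xv xs addn0 D1_frame ?xs.
Qed.

Lemma solvable_from_hub D s (N : {set T}) :
  (forall x y, connect e x y) -> s \notin N -> (forall v, v \in N -> e v s) ->
  2 ^ diam e <= D s + \sum_(v in N) (D v)./2 -> solvable e D.
Proof.
move=> e_conn sN N_adj heavy r.
have [||D1 [reach_D1 D1s _]] := reachable_gather D (s := s) (enum_uniq (pred_of_set N)).
- by rewrite mem_enum.
- by move=> v; rewrite mem_enum; apply: N_adj.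
have [p [p_path <- p_size]] := gdist_path (e_conn s r).
have [|D' [reach_D' D'_root]] := root_solvable_path (D := D1) p_path.
  rewrite p_size; apply: leq_trans D1s; rewrite big_enum; apply: leq_trans heavy.
  by rewrite leq_pexp2l // gdist_le_diam.
by exists D'; split=> //; apply: rt_trans reach_D1 reach_D'.
Qed.

End Pebbling.

Section Domination.
Variables (T : finType) (e : rel T) (S : {set T}).
Hypothesis S_dom : dominating e S.

Definition dominator (v : T) : T :=
  if v \in S then v else odflt v [pick u in S | e v u].

Lemma dominatorP v : dominator v \in S /\ (v \notin S -> e v (dominator v)).
Proof.
rewrite /dominator; case: ifPn => // vS; case: pickP => [u /andP[] //|no_dom].
by have [u uS evu] := S_dom vS; move: (no_dom u); rewrite uS evu.
Qed.

Definition star (s : T) : {set T} := [set v | (dominator v == s) && (v != s)].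

Lemma star_adj s v : v \in star s -> e v s.
Proof.
rewrite inE => /andP[/eqP <-]; have [_ adj] := dominatorP v.
by case: (boolP (v \in S)) => [vS|/adj //]; rewrite /dominator vS eqxx.
Qed.

Lemma sum_by_stars (F : T -> nat) :
  \sum_v F v = \sum_(s in S) (F s + \sum_(v in star s) F v).
Proof.
rewrite (partition_big dominator (fun s => s \in S)) => [|v _]; last by case: (dominatorP v).
apply: eq_bigr => s sS; rewrite (bigD1 s) /=; last by rewrite /dominator sS.
by congr (_ + _); apply: eq_bigl => v; rewrite inE.
Qed.

Lemma dsize_light_stars (D : {ffun T -> nat}) m :
  (forall s, s \in S -> D s + \sum_(v in star s) (D v)./2 < 2 ^ m) ->
  dsize D + 3 * #|S| <= 2 ^ m.+1 * #|S| + #|T|.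
Proof.
move=> light; have -> : #|T| = \sum_(v : T) 1 by rewrite -sum1_card.
rewrite /dsize !sum_by_stars.
rewrite ![_ * #|S|]mulnC -!sum_nat_const -!big_split; apply: leq_sum => s sS /=.
have := sum_le_double_halves (star s) D; have := light s sS.
rewrite sum1_card expnS; have : 0 < 2 ^ m by rewrite expn_gt0.
lia.
Qed.

End Domination.

Theorem theorem4 (T : finType) (e : rel T) (S : {set T}) :
  simple_graph e -> connected_graph e -> dominating e S ->
  pebbling_number e <= 2 ^ (diam e).+1 * #|S| + #|T| + 1 - 3 * #|S|.
Proof.
move=> [_ e_irr] e_conn S_dom; apply: pebbling_number_le => D sizeD.
have [/exists_inP[s sS heavy] | /exists_inPn light] := boolP
  [exists s in S, 2 ^ diam e <= D s + \sum_(v in star e S s) (D v)./2].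
  have s_star : s \notin star e S s by rewrite inE eqxx andbF.
  exact: (solvable_from_hub e_irr e_conn s_star (@star_adj _ _ _ S_dom s) heavy).
exfalso; have : dsize D + 3 * #|S| <= 2 ^ (diam e).+1 * #|S| + #|T|.
  by apply: (dsize_light_stars S_dom) => s sS; rewrite ltnNge light.
have : 2 <= 2 ^ (diam e).+1 by rewrite expnS leq_pmulr ?expn_gt0.
have : #|S| <= #|T| by apply: max_card.
lia.
Qed.
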